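(* Let $S$ be an additive numerical semigroup with multiplicity $e$ and blowup $B$. Then ${\rm d}_{\max}(S)=\max\{d(f;B^{\mathcal D}): f\in\operatorname{maxAp}(B;e)\}$.
   Context: $S$ is a numerical semigroup (a submonoid of $\mathbb N$ with finite complement) with minimal generators $e<a_1<\dots<a_t$. An $S$-factorization of $n$ is $(c_0,\dots,c_t)\in\mathbb N^{t+1}$ with $c_0e+\sum c_ia_i=n$, of length $\sum c_i$. ${\rm ord}(n;S)$ is the maximal such length, ${\rm d}_{\max}(n;S)$ is the number of factorizations of maximal length, and ${\rm d}_{\max}(S)=\max_{n\in S}{\rm d}_{\max}(n;S)$. $S$ is additive if ${\rm ord}(u+e;S)={\rm ord}(u;S)+1$ for all $u\in S$. The blowup is $B=\langle e,d_1,\dots,d_t\rangle$ with $d_i=a_i-e$, and $\mathcal D=(e,d_1,\dots,d_t)$. $d(b;B^{\mathcal D})$ is the number of tuples $(x_0,\dots,x_t)\in\mathbb N^{t+1}$ with $x_0e+\sum x_id_i=b$. For a numerical semigroup $T$ and $u\in T$, $\operatorname{Ap}(T;u)=\{w\in T:w-u\notin T\}$, and $\operatorname{maxAp}(T;u)$ is the set of elements of $\operatorname{Ap}(T;u)\setminus\{0\}$ that are maximal with respect to the partial order $w\preceq w'$ iff $w'-w\in T$. *)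

From mathcomp Require Import all_boot.
Set Implicit Arguments. Unset Strict Implicit. Unset Printing Implicit Defensive.

Definition inS (g : seq nat) (n : nat) : Prop :=
  exists c : 'I_(size g) -> nat, \sum_(i < size g) c i * nth 0 g i = n.

(* When all weights are positive
   (always the case below), every coefficient is <= n, so the bounded type
   'I_n.+1 captures all such tuples. *)
Definition fact_set (g : seq nat) (n : nat) : {set {ffun 'I_(size g) -> 'I_n.+1}} :=
  [set c : {ffun 'I_(size g) -> 'I_n.+1} | \sum_(i < size g) (c i : nat) * nth 0 g i == n].

Definition flen (k n : nat) (c : {ffun 'I_k -> 'I_n.+1}) : nat :=
  \sum_(i < k) (c i : nat).

Definition ordS (g : seq nat) (n : nat) : nat :=
  \max_(c in fact_set g n) flen c.

Definition dmax_n (g : seq nat) (n : nat) : nat :=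
  #|[set c in fact_set g n | flen c == ordS g n]|.

Definition dcount (D : seq nat) (b : nat) : nat := #|fact_set D b|.

Definition min_gens_numsg (g : seq nat) : Prop :=
  [/\ sorted ltn g,
      (forall a, a \in g -> ~ inS (rem a g) a) &
      exists N, forall n, N <= n -> inS g n].

Definition additive (e : nat) (g : seq nat) : Prop :=
  forall u, inS g u -> ordS g (u + e) = (ordS g u).+1.

(* Apery set Ap(T;u) = {w in T : w - u notin T} (integer subtraction) *)
Definition inAp (T : seq nat) (u w : nat) : Prop :=
  inS T w /\ (w < u \/ ~ inS T (w - u)).

Definition precT (T : seq nat) (w w' : nat) : Prop := w <= w' /\ inS T (w' - w).

Definition inmaxAp (T : seq nat) (u w : nat) : Prop :=
  [/\ inAp T u w, w <> 0 &
      forall w', inAp T u w' -> w' <> 0 -> precT T w w' -> w' = w].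

Definition is_max_of (P : nat -> Prop) (F : nat -> nat) (M : nat) : Prop :=
  (exists x, P x /\ F x = M) /\ (forall x, P x -> F x <= M).

Definition blowupD (e : nat) (as_ : seq nat) : seq nat :=
  e :: [seq a - e | a <- as_].

From mathcomp Require Import all_boot zify.
From Stdlib Require Import Classical.
Set Implicit Arguments. Unset Strict Implicit. Unset Printing Implicit Defensive.

(* A factorization of n in S of maximal length ord(n) reads
   n = ord(n) e + sum c_i d_i, and forgetting its e-coefficient is injective on
   maximal factorizations; hence d_max(n;S) <= d(r;B^D) for the residue
   r = n - ord(n) e.  Additivity puts r in Ap(B;e), and d(.;B^D) is monotone
   for <=_B, so d_max(n;S) <= d(f;B^D) for any f in maxAp(B;e) above r.
   Conversely, a B-factorization of f in Ap(B;e) has zero e-coefficient and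
   lifts to a factorization of f + f e of length f = ord(f + f e), so
   d(f;B^D) <= d_max(f + f e;S). *)

Definition wsum (w : seq nat) (h : nat -> nat) : nat :=
  \sum_(0 <= i < size w) h i * nth 0 w i.

Definition hlen (k : nat) (h : nat -> nat) : nat := \sum_(0 <= i < k) h i.

Definition agree (k : nat) (h h' : nat -> nat) : Prop :=
  forall i, i < k -> h i = h' i.

Definition coef k m (c : {ffun 'I_k -> 'I_m.+1}) (i : nat) : nat :=
  if insub i is Some j then c j else 0.

(* [inord] truncates: [ffun_of k m h] is faithful only where [h i <= m]. *)
Definition ffun_of k m (h : nat -> nat) : {ffun 'I_k -> 'I_m.+1} :=
  [ffun j : 'I_k => inord (h j)].

Definition pos_weights (w : seq nat) : Prop :=
  forall i, i < size w -> 0 < nth 0 w i.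

Lemma coefE k m (c : {ffun 'I_k -> 'I_m.+1}) (j : 'I_k) : coef c j = c j.
Proof. by rewrite /coef valK. Qed.

Lemma coef_ffun_of k m (h : nat -> nat) i :
  i < k -> h i <= m -> coef (ffun_of k m h) i = h i.
Proof. by move=> ik him; rewrite /coef (insubT (fun i => i < k) ik) ffunE inordK. Qed.

Lemma coef_inj k m (c c' : {ffun 'I_k -> 'I_m.+1}) :
  agree k (coef c) (coef c') -> c = c'.
Proof.
by move=> cc'; apply/ffunP => j; apply/val_inj; rewrite /= -!coefE cc'.
Qed.

Lemma fact_setE w n (c : {ffun 'I_(size w) -> 'I_n.+1}) :
  (c \in fact_set w n) = (wsum w (coef c) == n).
Proof.
by rewrite inE /wsum big_mkord; congr (_ == _); apply: eq_bigr => j _; rewrite coefE.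
Qed.

Lemma flenE k n (c : {ffun 'I_k -> 'I_n.+1}) : flen c = hlen k (coef c).
Proof. by rewrite /flen /hlen big_mkord; apply: eq_bigr => j _; rewrite coefE. Qed.

Lemma dmax_nE w n :
  dmax_n w n = #|[set c in fact_set w n | hlen (size w) (coef c) == ordS w n]|.
Proof. by apply: eq_card => c; rewrite !inE flenE. Qed.

(* [xpredT (coef c)] matches the shape of the sets in [leq_card_fact]. *)
Lemma dcountE w n : dcount w n = #|[set c in fact_set w n | xpredT (coef c)]|.
Proof. by apply: eq_card => c; rewrite !inE andbT. Qed.

Lemma eq_hlen k h h' : agree k h h' -> hlen k h = hlen k h'.
Proof. by move=> agr; apply/eq_big_nat => i /andP[_ ik]; rewrite agr. Qed.

Lemma inS_wsum w n : inS w n <-> exists h, wsum w h = n.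
Proof.
rewrite /wsum; split => [[c <-] | [h <-]].
- exists (fun i => if insub i is Some j then c j else 0).
  by rewrite big_mkord; apply: eq_bigr => j _; rewrite valK.
- by exists (fun j => h j); rewrite big_mkord.
Qed.

Lemma wsumD w h h' : wsum w (fun i => h i + h' i) = wsum w h + wsum w h'.
Proof. by rewrite /wsum -big_split; apply: eq_bigr => i _; rewrite mulnDl. Qed.

Lemma inS0 w : inS w 0.
Proof. by apply/inS_wsum; exists (fun _ => 0); rewrite /wsum big1. Qed.

Lemma inS_add w x y : inS w x -> inS w y -> inS w (x + y).
Proof.
move=> /inS_wsum[h <-] /inS_wsum[h' <-]; apply/inS_wsum.
by exists (fun i => h i + h' i); rewrite wsumD.
Qed.

Lemma precT_trans w x y z : precT w x y -> precT w y z -> precT w x z.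
Proof.
move=> [xy Sxy] [yz Syz]; split; first exact: leq_trans yz.
have -> : z - x = (z - y) + (y - x) by lia.
exact: inS_add.
Qed.

Lemma inAp_lt T u N : (forall n, N <= n -> inS T n) ->
  forall w, inAp T u w -> w < N + u.
Proof.
move=> TN w [_ Ap_w]; rewrite ltnNge; apply/negP => Nw.
by case: Ap_w => [|]; [lia | apply; apply: TN; lia].
Qed.

Section PositiveWeights.

Variable w : seq nat.
Hypothesis w_pos : pos_weights w.

Lemma wsum_coef_le h n i : wsum w h = n -> i < size w -> h i <= n.
Proof.
move=> <- iw; rewrite /wsum big_mkord (bigD1 (Ordinal iw)) //=.
by apply: leq_trans (leq_addr _ _); rewrite leq_pmulr // w_pos.
Qed.

Lemma ffun_of_fact h n : wsum w h = n ->
  ffun_of (size w) n h \in fact_set w n /\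
  agree (size w) (coef (ffun_of (size w) n h)) h.
Proof.
move=> hn; have agr : agree (size w) (coef (ffun_of (size w) n h)) h.
  by move=> i iw; rewrite coef_ffun_of // (wsum_coef_le hn).
split=> //; rewrite fact_setE; apply/eqP; rewrite -[RHS]hn.
by apply/eq_big_nat => i /andP[_ iw]; rewrite agr.
Qed.

Lemma hlen_le_ordS h n : wsum w h = n -> hlen (size w) h <= ordS w n.
Proof.
move=> hn; have [fact agr] := ffun_of_fact hn.
have -> : hlen (size w) h = flen (ffun_of (size w) n h).
  by rewrite flenE; apply/eq_big_nat => i /andP[_ iw]; rewrite agr.
exact: (leq_bigmax_cond (P := mem (fact_set w n))).
Qed.

Lemma ordS_attained n : inS w n ->
  exists h, wsum w h = n /\ hlen (size w) h = ordS w n.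
Proof.
move=> /inS_wsum[h hn]; have [fact _] := ffun_of_fact hn.
have /(eq_bigmax_cond (@flen (size w) n)) [c c_fact c_max] :
  0 < #|mem (fact_set w n)| by apply/card_gt0P; exists (ffun_of (size w) n h).
exists (coef c); split; first by apply/eqP; rewrite -fact_setE.
by rewrite /ordS c_max flenE.
Qed.

Lemma leq_card_fact v m n (P : pred {ffun 'I_(size v) -> 'I_m.+1})
    (Q : pred (nat -> nat)) (phi : (nat -> nat) -> nat -> nat) :
  (forall h h', agree (size w) h h' -> Q h = Q h') ->
  (forall c, c \in fact_set v m -> P c ->
     wsum w (phi (coef c)) = n /\ Q (phi (coef c))) ->
  {in [pred c | (c \in fact_set v m) && P c] &, forall c c',
     agree (size w) (phi (coef c)) (phi (coef c')) -> c = c'} ->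
  #|[set c in fact_set v m | P c]| <= #|[set c in fact_set w n | Q (coef c)]|.
Proof.
move=> Q_ext phi_fact phi_inj.
pose F (c : {ffun 'I_(size v) -> 'I_m.+1}) := ffun_of (size w) n (phi (coef c)).
have F_fact c : c \in [set c in fact_set v m | P c] ->
    F c \in fact_set w n /\ agree (size w) (coef (F c)) (phi (coef c)).
  by rewrite inE => /andP[cf Pc]; exact: ffun_of_fact (phi_fact c cf Pc).1.
have F_inj : {in [set c in fact_set v m | P c] &, injective F}.
  move=> c c' cA c'A eqF; have [_ agr] := F_fact c cA; have [_ agr'] := F_fact c' c'A.
  apply: phi_inj; [by move: cA; rewrite inE | by move: c'A; rewrite inE |].
  by move=> i iw; rewrite -agr // -agr' // eqF.
rewrite -(card_in_imset F_inj); apply/subset_leq_card/subsetP => _ /imsetP[c cA ->].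
have [fact agr] := F_fact c cA; rewrite inE fact (Q_ext _ _ agr).
move: cA; rewrite inE => /andP[cf Pc].
exact: (phi_fact c cf Pc).2.
Qed.

Lemma dcount_addr b y : inS w y -> dcount w b <= dcount w (b + y).
Proof.
move=> /inS_wsum[hy hyE]; rewrite !dcountE.
apply: (leq_card_fact (P := fun c => xpredT (coef c)) (Q := xpredT)
          (phi := fun h i => h i + hy i)) => //.
  by move=> c; rewrite fact_setE => /eqP cb _; rewrite wsumD cb hyE.
by move=> c c' _ _ agr; apply: coef_inj => i iw; have := agr i iw; lia.
Qed.

End PositiveWeights.

Definition with_head (k : nat) (h : nat -> nat) (i : nat) : nat :=
  if i is j.+1 then h j.+1 else k.

Lemma size_blowupD e as_ : size (blowupD e as_) = (size as_).+1.
Proof. by rewrite /= size_map. Qed.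

Lemma nth_blowupD e as_ i : nth 0 (blowupD e as_) i.+1 = nth 0 as_ i - e.
Proof.
have [i_lt | i_ge] := ltnP i (size as_); first by rewrite /= (nth_map 0).
by rewrite /= !nth_default ?size_map.
Qed.

Section Blowup.

Variables (e : nat) (as_ : seq nat).
Hypotheses (e_gt0 : 0 < e) (as_gt_e : all (fun a => e < a) as_).
Local Notation S := (e :: as_).
Local Notation B := (blowupD e as_).

Definition tlen (h : nat -> nat) : nat := \sum_(0 <= i < size as_) h i.+1.
Definition dsum (h : nat -> nat) : nat :=
  \sum_(0 <= i < size as_) h i.+1 * (nth 0 as_ i - e).

Lemma tlen_with_head k h : tlen (with_head k h) = tlen h.
Proof. by []. Qed.

Lemma dsum_with_head k h : dsum (with_head k h) = dsum h.
Proof. by []. Qed.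

Lemma nth_gt_e i : i < size as_ -> e < nth 0 as_ i.
Proof. exact: (all_nthP 0 as_gt_e). Qed.

Lemma wsum_S h : wsum S h = (h 0 + tlen h) * e + dsum h.
Proof.
rewrite /wsum big_nat_recl //= mulnDl -addnA; congr (_ + _).
rewrite /tlen /dsum big_distrl -big_split; apply: eq_big_nat => i /andP[_ i_lt] /=.
by rewrite -mulnDr subnKC // ltnW // nth_gt_e.
Qed.

Lemma wsum_B h : wsum B h = h 0 * e + dsum h.
Proof.
rewrite /wsum size_blowupD big_nat_recl //; congr (_ + _).
by apply: eq_big_nat => i _; rewrite nth_blowupD.
Qed.

Lemma hlen_S h : hlen (size S) h = h 0 + tlen h.
Proof. by rewrite /hlen big_nat_recl. Qed.

Lemma eq_tlen h h' : (forall i, i < size as_ -> h i.+1 = h' i.+1) -> tlen h = tlen h'.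
Proof. by move=> hh'; apply/eq_big_nat => i /andP[_ i_lt]; rewrite hh'. Qed.

Lemma tlen_le_dsum h : tlen h <= dsum h.
Proof.
rewrite /tlen /dsum !big_mkord; apply: leq_sum => i _.
by rewrite leq_pmulr // subn_gt0 nth_gt_e.
Qed.

Lemma pos_weights_S : pos_weights S.
Proof. by move=> [|i] //= /nth_gt_e; apply: leq_trans. Qed.

Lemma pos_weights_B : pos_weights B.
Proof. by move=> [|i] //; rewrite size_blowupD nth_blowupD subn_gt0; apply: nth_gt_e. Qed.

Lemma inB_dsum k h : inS B (k * e + dsum h).
Proof. by apply/inS_wsum; exists (with_head k h); rewrite wsum_B. Qed.

Lemma inS_inB n : inS S n -> inS B n.
Proof. by move=> /inS_wsum[h <-]; rewrite wsum_S; apply: inB_dsum. Qed.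

Lemma inS_addMe n k : inS S n -> inS S (n + k * e).
Proof.
move=> /inS_wsum[h <-]; apply/inS_wsum; exists (with_head (h 0 + k) h).
rewrite !wsum_S tlen_with_head dsum_with_head /=; nia.
Qed.

Lemma ordS_addMe n k : additive e S -> inS S n -> ordS S (n + k * e) = ordS S n + k.
Proof.
move=> S_add Sn; elim: k => [|k IHk]; first by rewrite !addn0.
rewrite mulSn addnCA addnC S_add ?IHk ?addnS //.
exact: inS_addMe.
Qed.

Lemma ordS_attained_S n : inS S n -> exists h, n = ordS S n * e + dsum h.
Proof.
move=> /(ordS_attained pos_weights_S)[h [<-]]; rewrite hlen_S => <-.
by exists h; rewrite wsum_S.
Qed.

(* If r - e were in B, raising the e-coefficient of a B-factorization of r - e
   would give a factorization of n + k e longer than ord(n) + k. *)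
Lemma ordS_residue_inAp n : additive e S -> inS S n -> inAp B e (n - ordS S n * e).
Proof.
move=> S_add Sn; have [h n_eq] := ordS_attained_S Sn.
set L := ordS S n in n_eq *.
have -> : n - L * e = dsum h by lia.
split; first by rewrite -[dsum h]add0n -(mul0n e); apply: inB_dsum.
have [lt_e | ge_e] := ltnP (dsum h) e; [by left | right].
move=> /inS_wsum[x]; rewrite wsum_B => x_eq.
pose c := with_head (L + 1 + x 0) x.
have c_fact : wsum S c = n + tlen x * e.
  by rewrite wsum_S tlen_with_head dsum_with_head /=; nia.
have := hlen_le_ordS pos_weights_S c_fact.
by rewrite hlen_S tlen_with_head ordS_addMe // -/L /=; lia.
Qed.

Lemma Ap_head0 f x : inAp B e f -> wsum B x = f -> x 0 = 0.
Proof.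
move=> [_ Ap_f]; rewrite wsum_B; case x0: (x 0) => [//|k] f_eq; exfalso.
case: Ap_f => [|]; first nia.
apply; have -> : f - e = k * e + dsum x by rewrite -f_eq mulSn -addnA addKn.
exact: inB_dsum.
Qed.

Lemma dmax_le_dcount_residue n : dmax_n S n <= dcount B (n - ordS S n * e).
Proof.
rewrite dmax_nE dcountE.
apply: (leq_card_fact pos_weights_B (Q := xpredT) (phi := with_head 0)) => //.
  move=> c; rewrite fact_setE hlen_S => /eqP c_n /eqP c_len; split => //.
  by move: c_n; rewrite wsum_B dsum_with_head wsum_S c_len /=; lia.
move=> c c' /andP[_ /eqP] + /andP[_ /eqP]; rewrite !hlen_S => len len' agr.
have tail i : i < size as_ -> coef c i.+1 = coef c' i.+1.
  by move=> i_lt; apply: (agr i.+1); rewrite size_blowupD.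
apply: coef_inj => -[_ | i /tail //].
have := eq_tlen tail; lia.
Qed.

Definition ap_lift (f : nat) (x : nat -> nat) : nat -> nat := with_head (f - tlen x) x.

Lemma ap_lift_fact f x : inAp B e f -> wsum B x = f ->
  wsum S (ap_lift f x) = f + f * e /\ hlen (size S) (ap_lift f x) = f.
Proof.
move=> Ap_f x_f; move: (x_f); rewrite wsum_B (Ap_head0 Ap_f x_f) mul0n add0n => dsum_x.
have tlen_le : tlen x <= f by rewrite -dsum_x tlen_le_dsum.
rewrite /ap_lift wsum_S hlen_S tlen_with_head dsum_with_head /= subnK //.
by rewrite dsum_x addnC.
Qed.

Lemma inS_ap_lift f : inAp B e f -> inS S (f + f * e).
Proof.
move=> Ap_f; have [/inS_wsum[x x_f] _] := Ap_f.
by apply/inS_wsum; exists (ap_lift f x); case: (ap_lift_fact Ap_f x_f).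
Qed.

Lemma ordS_ap_lift f : inAp B e f -> ordS S (f + f * e) = f.
Proof.
move=> Ap_f; have [/inS_wsum[x x_f] Ap_f'] := Ap_f.
have [lift_f lift_len] := ap_lift_fact Ap_f x_f.
have f_le : f <= ordS S (f + f * e).
  by rewrite -{1}lift_len; apply: (hlen_le_ordS pos_weights_S lift_f).
apply/eqP; rewrite eqn_leq f_le andbT.
have [h h_eq] := ordS_attained_S (inS_ap_lift Ap_f).
rewrite leqNgt; apply/negP => f_lt.
have [m m_eq] : exists m, ordS S (f + f * e) = f.+1 + m.
  by exists (ordS S (f + f * e) - f.+1); lia.
rewrite m_eq in h_eq; case: Ap_f' => [|]; first nia.
apply; have -> : f - e = m * e + dsum h by nia.
exact: inB_dsum.
Qed.

Lemma dcount_le_dmax_ap_lift f : inAp B e f -> dcount B f <= dmax_n S (f + f * e).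
Proof.
move=> Ap_f; rewrite dcountE dmax_nE.
apply: (leq_card_fact pos_weights_S (P := fun c => xpredT (coef c))
          (Q := fun h => hlen (size S) h == ordS S (f + f * e)) (phi := ap_lift f)).
- by move=> h h' /eq_hlen ->.
- move=> c; rewrite fact_setE => /eqP c_f _.
  by have [-> ->] := ap_lift_fact Ap_f c_f; rewrite ordS_ap_lift.
move=> c c' /andP[+ _] /andP[+ _]; rewrite !fact_setE => /eqP c_f /eqP c'_f agr.
apply: coef_inj => -[_ | i i_lt]; first by rewrite (Ap_head0 Ap_f c_f) (Ap_head0 Ap_f c'_f).
by apply: (agr i.+1); rewrite size_blowupD in i_lt.
Qed.

(* The residue of N e + 1 is congruent to 1 modulo e. *)
Lemma exists_nonzero_inAp N : 1 < e -> additive e S ->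
  (forall n, N <= n -> inS S n) -> exists w, inAp B e w /\ w <> 0.
Proof.
move=> e_gt1 S_add SN; have Sn : inS S (N * e + 1) by apply: SN; nia.
exists (N * e + 1 - ordS S (N * e + 1) * e); split; first exact: ordS_residue_inAp.
have [h n_eq] := ordS_attained_S Sn => res0.
have : (N * e + 1) %% e = ordS S (N * e + 1) * e %% e by congr (_ %% e); lia.
by rewrite modnMl modnMDl modn_small.
Qed.

End Blowup.

Lemma bounded_ex_max (P : nat -> Prop) K :
  (exists x, P x) -> (forall x, P x -> x < K) ->
  exists2 x, P x & forall y, P y -> y <= x.
Proof.
elim: K => [|K IHK] [x Px] P_lt; first by have := P_lt x Px.
have [PK | notPK] := classic (P K).
  by exists K => // y /P_lt.
apply: IHK; first by exists x.
move=> y Py; have := P_lt y Py; rewrite ltnS leq_eqVlt => /orP[/eqP yK | //].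
by rewrite yK in Py.
Qed.

Lemma bounded_ex_argmax (P : nat -> Prop) (F : nat -> nat) K :
  (exists x, P x) -> (forall x, P x -> x < K) ->
  exists2 x, P x & forall y, P y -> F y <= F x.
Proof.
move=> [x Px] P_lt; pose image v := exists2 y, P y & F y = v.
have [_ [y Py <-] F_max] : exists2 v, image v & forall v', image v' -> v' <= v.
  apply: (bounded_ex_max (K := (\max_(i < K) F i).+1)); first by exists (F x), x.
  move=> _ [y /P_lt y_lt <-]; rewrite ltnS.
  exact: (leq_bigmax_cond (P := xpredT) (F := fun i : 'I_K => F i) (Ordinal y_lt)).
by exists y => // z Pz; apply: F_max; exists z.
Qed.

Lemma inAp_below_maxAp T u N : (forall n, N <= n -> inS T n) ->
  (exists w, inAp T u w /\ w <> 0) ->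
  forall b, inAp T u b -> exists2 f, inmaxAp T u f & precT T b f.
Proof.
move=> TN [w [Ap_w w0]] b Ap_b.
pose P f := [/\ inAp T u f, f <> 0 & precT T b f].
have [f [Ap_f f0 bf] f_max] : exists2 f, P f & forall f', P f' -> f' <= f.
  apply: (bounded_ex_max (K := N + u)); last by move=> f [/(inAp_lt TN)].
  have [b0 | b0] := eqVneq b 0.
    by exists w; split => //; rewrite b0; split; rewrite ?subn0 //; case: Ap_w.
  exists b; split => //; first exact/eqP.
  by split; rewrite // subnn; apply: inS0.
exists f => //; split => // f' Ap_f' f'0 ff'.
have : f' <= f by apply: f_max; split => //; apply: precT_trans bf ff'.
by case: ff'; lia.
Qed.

Theorem theorem4p8 (e : nat) (as_ : seq nat) :
  min_gens_numsg (e :: as_) ->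
  2 <= e ->
  additive e (e :: as_) ->
  exists M : nat,
    is_max_of (inS (e :: as_)) (dmax_n (e :: as_)) M /\
    is_max_of (inmaxAp (blowupD e as_) e) (dcount (blowupD e as_)) M.
Proof.
case=> [S_sorted _ [N SN]] e_gt1 S_add.
have as_gt_e : all (fun a => e < a) as_ := order_path_min ltn_trans S_sorted.
have e_gt0 : 0 < e by apply: ltnW.
have BN n : N <= n -> inS (blowupD e as_) n by move/SN; apply: inS_inB.
have [w Ap_w] := exists_nonzero_inAp e_gt0 as_gt_e e_gt1 S_add SN.
have below := inAp_below_maxAp BN (ex_intro _ w Ap_w).
have maxAp_ne : exists f, inmaxAp (blowupD e as_) e f.
  by have [f max_f _] := below w Ap_w.1; exists f.
have maxAp_lt f : inmaxAp (blowupD e as_) e f -> f < N + e by case=> /(inAp_lt BN).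
have [fs max_fs fs_max] := bounded_ex_argmax (dcount (blowupD e as_)) maxAp_ne maxAp_lt.
exists (dcount (blowupD e as_) fs); split; last by split; first exists fs.
have [Ap_fs _ _] := max_fs; split.
  exists (fs + fs * e); split; first exact: inS_ap_lift.
  apply/eqP; rewrite eqn_leq dcount_le_dmax_ap_lift // andbT.
  by have := dmax_le_dcount_residue e_gt0 as_gt_e (fs + fs * e); rewrite ordS_ap_lift ?addnK.
move=> n Sn; apply: leq_trans (dmax_le_dcount_residue e_gt0 as_gt_e n) _.
have [f max_f [res_le_f res_f]] := below _ (ordS_residue_inAp e_gt0 as_gt_e S_add Sn).
apply: leq_trans (fs_max f max_f); rewrite -(subnKC res_le_f).
exact: dcount_addr (pos_weights_B e_gt0 as_gt_e) _ _ res_f.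
Qed.
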